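(* Let $\mathcal{E}_{tr}$ be a finite set of training environments, let $\mathcal{H}_\Phi$ be a class of representations $\Phi:\mathcal{X}\to\mathcal{Z}$ and let $\mathcal{H}_w$ be a class of classifiers $w:\mathcal{Z}\to\mathbb{R}^k$. Suppose $\mathcal{H}_w$ satisfies affine closure: for all $w_1,w_2\in\mathcal{H}_w$ and $c\in\mathbb{R}$, the pointwise sum $w_1+w_2$ and the pointwise scalar multiple $cw$ belong to $\mathcal{H}_w$. Then $\tilde{\mathcal{S}}^{\mathsf{IV}}=\tilde{\mathcal{S}}^{\mathsf{EIRM}}$.
   Context: Setting: For each environment $e\in\mathcal{E}_{tr}$ there is a joint distribution of a random pair $(X^e,Y^e)$ with $X^e\in\mathcal{X}\subseteq\mathbb{R}^n$, $Y^e\in\mathcal{Y}\subseteq\mathbb{R}^k$. Given a loss $\ell$, the risk of a predictor $f:\mathcal{X}\to\mathbb{R}^k$ in environment $e$ is $R^e(f)=\mathbb{E}[\ell(f(X^e),Y^e)]$. Representations $\Phi\in\mathcal{H}_\Phi$ map $\mathcal{X}\to\mathcal{Z}\subseteq\mathbb{R}^d$; classifiers $w\in\mathcal{H}_w$ map $\mathcal{Z}\to\mathbb{R}^k$. Invariant pairs: $\mathcal{S}^{\mathsf{IV}}$ is the set of $(\Phi,w)\in\mathcal{H}_\Phi\times\mathcal{H}_w$ such that $R^e(w\circ\Phi)\le R^e(\bar w\circ\Phi)$ for all $\bar w\in\mathcal{H}_w$ and all $e\in\mathcal{E}_{tr}$. $\tilde{\mathcal{S}}^{\mathsf{IV}}$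 is the set of tuples $(\Phi,\{w^q\}_{q\in\mathcal{E}_{tr}},w)$ such that $(\Phi,w)\in\mathcal{S}^{\mathsf{IV}}$, each $w^q\in\mathcal{H}_w$, and $w=\frac{1}{|\mathcal{E}_{tr}|}\sum_{q}w^q$ (pointwise). Ensemble game (EIRM): given $\Phi\in\mathcal{H}_\Phi$, the players are the environments $e\in\mathcal{E}_{tr}$, player $e$ chooses $w^e\in\mathcal{H}_w$, and its utility is $u_e(w^e,w^{-e},\Phi)=-R^e(w^{av}\circ\Phi)$ where $w^{av}=\frac{1}{|\mathcal{E}_{tr}|}\sum_{q\in\mathcal{E}_{tr}}w^q$. A pure Nash equilibrium is a profile $\{w^q\}$ with $u_e(w^e,w^{-e},\Phi)\ge u_e(\bar w^e,w^{-e},\Phi)$ for all $\bar w^e\in\mathcal{H}_w$ and all $e$. $\mathcal{S}^{\mathsf{EIRM}}$ is the set of tuples $(\Phi,\{w^q\}_{q\in\mathcal{E}_{tr}})$ with $\Phi\in\mathcal{H}_\Phi$ and $\{w^q\}$ a pure Nash equilibrium of the game given $\Phi$; $\tilde{\mathcal{S}}^{\mathsf{EIRM}}$ is the set of tuples $(\Phi,\{w^q\},w^{av})$ with $(\Phi,\{w^q\})\in\mathcal{S}^{\mathsf{EIRM}}$ and $w^{av}=\frac{1}{|\mathcal{E}_{tr}|}\sum_q w^q$. *)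

From HB Require Import structures.
From mathcomp Require Import all_boot all_order all_algebra.
From mathcomp Require Import all_classical all_reals all_analysis.
Set Implicit Arguments. Unset Strict Implicit. Unset Printing Implicit Defensive.
Import Order.TTheory GRing.Theory Num.Theory.
Local Open Scope classical_set_scope.
Local Open Scope ring_scope.

Section IRM.
Context {R : realType} {d : measure_display} {Omega : measurableType d}
  {E : finType} {X Y Z : Type} {k : nat}.

Variables (P : E -> probability Omega R) (Xe : E -> Omega -> X)
  (Ye : E -> Omega -> Y) (loss : 'rV[R]_k -> Y -> R).

Definition risk (e : E) (f : X -> 'rV[R]_k) : \bar R :=
  (\int[P e]_(om in setT) (loss (f (Xe e om)) (Ye e om))%:E)%E.

Definition wavg (ws : E -> Z -> 'rV[R]_k) : Z -> 'rV[R]_k :=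
  fun z => (#|E|%:R)^-1 *: \sum_(q : E) ws q z.

Definition affine_closed (Hw : set (Z -> 'rV[R]_k)) : Prop :=
  (forall w1 w2, Hw w1 -> Hw w2 -> Hw (fun z => w1 z + w2 z)) /\
  (forall (c : R) w, Hw w -> Hw (fun z => c *: w z)).

Variables (HPhi : set (X -> Z)) (Hw : set (Z -> 'rV[R]_k)).

Definition S_IV : set ((X -> Z) * (Z -> 'rV[R]_k)) :=
  [set pw | HPhi pw.1 /\ Hw pw.2 /\
     forall wb, Hw wb -> forall e, (risk e (pw.2 \o pw.1) <= risk e (wb \o pw.1))%E].

Definition S_IV_tilde :
  set ((X -> Z) * (E -> Z -> 'rV[R]_k) * (Z -> 'rV[R]_k)) :=
  [set t | S_IV (t.1.1, t.2) /\ (forall q, Hw (t.1.2 q)) /\ t.2 = wavg t.1.2].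

Definition upd (ws : E -> Z -> 'rV[R]_k) (e : E) (v : Z -> 'rV[R]_k) :=
  fun q => if q == e then v else ws q.

Definition utility (e : E) (ws : E -> Z -> 'rV[R]_k) (Phi : X -> Z) : \bar R :=
  (- risk e (wavg ws \o Phi))%E.

Definition pure_NE (Phi : X -> Z) (ws : E -> Z -> 'rV[R]_k) : Prop :=
  (forall q, Hw (ws q)) /\
  forall e wb, Hw wb -> (utility e (upd ws e wb) Phi <= utility e ws Phi)%E.

Definition S_EIRM : set ((X -> Z) * (E -> Z -> 'rV[R]_k)) :=
  [set p | HPhi p.1 /\ pure_NE p.1 p.2].

Definition S_EIRM_tilde :
  set ((X -> Z) * (E -> Z -> 'rV[R]_k) * (Z -> 'rV[R]_k)) :=
  [set t | S_EIRM (t.1.1, t.1.2) /\ t.2 = wavg t.1.2].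

End IRM.

From mathcomp Require Import all_boot all_order all_algebra.
From mathcomp Require Import all_classical all_reals all_analysis.
Set Implicit Arguments. Unset Strict Implicit. Unset Printing Implicit Defensive.
Import Order.TTheory GRing.Theory Num.Theory.
Local Open Scope classical_set_scope.
Local Open Scope ring_scope.

(* Under affine closure a single player e can move the ensemble average
   w^av = (1/|E|) sum_q w^q to any classifier w of H_w, by playing
   w^e + |E| (w - w^av).  Hence "no unilateral deviation of e lowers
   R^e(w^av o Phi)" says exactly that w^av is optimal in H_w for environment e,
   which is the invariance condition; and w^av itself lies in H_w. *)

Section AffineClosure.
Variables (R : realType) (Z : Type) (k : nat) (Hw : set (Z -> 'rV[R]_k)).
Hypothesis Hw_affine : affine_closed Hw.

Lemma affine_closed_sum (I : finType) (ws : I -> Z -> 'rV[R]_k) :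
  (0 < #|I|)%N -> (forall i, Hw (ws i)) -> Hw (fun z => \sum_i ws i z).
Proof.
move=> /card_gt0P[i0 _] Hws; rewrite -fct_sumE.
have Hw0 : Hw (fun _ => 0).
  by rewrite -(funext (fun z => scale0r (ws i0 z))); apply: Hw_affine.2.
by apply: big_ind => // f g; apply: Hw_affine.1.
Qed.

Lemma affine_closed_wavg (E : finType) (ws : E -> Z -> 'rV[R]_k) :
  (0 < #|E|)%N -> (forall q, Hw (ws q)) -> Hw (wavg ws).
Proof. by move=> E0 Hws; apply: Hw_affine.2; apply: affine_closed_sum. Qed.

Definition deviation_to (E : finType) (ws : E -> Z -> 'rV[R]_k) (e : E)
    (w : Z -> 'rV[R]_k) : Z -> 'rV[R]_k :=
  fun z => ws e z + #|E|%:R *: (w z - wavg ws z).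

Lemma affine_closed_deviation_to (E : finType) (ws : E -> Z -> 'rV[R]_k) e w :
  (0 < #|E|)%N -> (forall q, Hw (ws q)) -> Hw w -> Hw (deviation_to ws e w).
Proof.
move=> E0 Hws Hw_w; have [Hadd Hscale] := Hw_affine.
have -> : deviation_to ws e w =
    fun z => ws e z + #|E|%:R *: (w z + (-1) *: wavg ws z).
  by apply/funext => z; rewrite scaleN1r.
apply: (Hadd) => //; apply: (Hscale); apply: (Hadd) => //.
by apply: (Hscale); apply: affine_closed_wavg.
Qed.

End AffineClosure.

Lemma wavg_upd (R : realType) (E : finType) (Z : Type) (k : nat)
    (ws : E -> Z -> 'rV[R]_k) (e : E) (v : Z -> 'rV[R]_k) (z : Z) :
  wavg (upd ws e v) z = wavg ws z + #|E|%:R^-1 *: (v z - ws e z).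
Proof.
rewrite /wavg -scalerDr; congr (_ *: _).
rewrite (bigD1 e) //= [in RHS](bigD1 e) //= {1}/upd eqxx.
rewrite (eq_bigr (fun q => ws q z)) => [|q /negPf qe]; last by rewrite /upd qe.
by rewrite [RHS]addrAC [ws e z + _]addrC subrK.
Qed.

Lemma wavg_upd_deviation_to (R : realType) (E : finType) (Z : Type) (k : nat)
    (ws : E -> Z -> 'rV[R]_k) (e : E) (w : Z -> 'rV[R]_k) :
  (0 < #|E|)%N -> wavg (upd ws e (deviation_to ws e w)) = w.
Proof.
move=> E0; have nE0 : #|E|%:R != 0 :> R by rewrite pnatr_eq0 -lt0n.
apply/funext => z; rewrite wavg_upd /deviation_to [ws e z + _]addrC addrK.
by rewrite scalerA mulVf // scale1r subrKC.
Qed.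

Section EnsembleGame.
Context {R : realType} {d : measure_display} {Omega : measurableType d}
  {E : finType} {X Y Z : Type} {k : nat}.
Variables (P : E -> probability Omega R) (Xe : E -> Omega -> X)
  (Ye : E -> Omega -> Y) (loss : 'rV[R]_k -> Y -> R) (Hw : set (Z -> 'rV[R]_k)).
Hypotheses (Hw_affine : affine_closed Hw) (E0 : (0 < #|E|)%N).

Lemma pure_NE_wavg_optimal (Phi : X -> Z) (ws : E -> Z -> 'rV[R]_k) :
  pure_NE P Xe Ye loss Hw Phi ws ->
  forall wb, Hw wb -> forall e,
    (risk P Xe Ye loss e (wavg ws \o Phi) <= risk P Xe Ye loss e (wb \o Phi))%E.
Proof.
move=> [Hws NE] wb Hwb e.
have := NE e _ (affine_closed_deviation_to Hw_affine e E0 Hws Hwb).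
by rewrite /utility leeN2 wavg_upd_deviation_to.
Qed.

Lemma wavg_optimal_pure_NE (Phi : X -> Z) (ws : E -> Z -> 'rV[R]_k) :
  (forall q, Hw (ws q)) ->
  (forall wb, Hw wb -> forall e,
    (risk P Xe Ye loss e (wavg ws \o Phi) <= risk P Xe Ye loss e (wb \o Phi))%E) ->
  pure_NE P Xe Ye loss Hw Phi ws.
Proof.
move=> Hws opt; split => // e wb Hwb; rewrite /utility leeN2.
apply: opt; apply: (affine_closed_wavg Hw_affine E0) => q.
by rewrite /upd; case: ifP.
Qed.

End EnsembleGame.

Theorem theorem1 (R : realType) (d : measure_display) (Omega : measurableType d)
  (E : finType) (X Y Z : Type) (k : nat)
  (P : E -> probability Omega R) (Xe : E -> Omega -> X) (Ye : E -> Omega -> Y)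
  (loss : 'rV[R]_k -> Y -> R)
  (HPhi : set (X -> Z)) (Hw : set (Z -> 'rV[R]_k)) :
  (0 < #|E|)%N ->
  affine_closed Hw ->
  S_IV_tilde P Xe Ye loss HPhi Hw = S_EIRM_tilde P Xe Ye loss HPhi Hw.
Proof.
move=> E0 Hw_affine; apply/seteqP; split => -[[Phi ws] w];
  rewrite /S_IV_tilde /S_EIRM_tilde /S_IV /S_EIRM /=.
- move=> [[HPhi_Phi [_ opt]] [Hws Ew]]; subst w.
  split=> //; split=> //.
  exact: (wavg_optimal_pure_NE Hw_affine E0 Hws opt).
- move=> [[HPhi_Phi NE] ->]; have [Hws _] := NE.
  split=> //; split=> //; split.
  - exact: (affine_closed_wavg Hw_affine E0 Hws).
  - exact: (pure_NE_wavg_optimal Hw_affine E0 NE).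
Qed.
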